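(* Let $f_{s_1d}, f_{s_1r}, f_{rd}, g_{rd}^{s_1}, g_{s_1d}^{r}\in[0,1]$ satisfy $0\le g_{s_1d}^{r}\le f_{s_1d}$ and $0\le g_{rd}^{s_1}< f_{rd}$. Set $T_1=(1-f_{s_1d})f_{s_1r}$ and assume $T_1>0$. For $x\in[0,1]$ define $$\mu_1(x)=(1-x)(f_{s_1d}+T_1)+x\,g_{s_1d}^{r},$$ $$\mu_{u_1}^{\mathrm{SBC}}(x)=\frac{f_{rd}}{(1-x)T_1+f_{rd}-x\,g_{rd}^{s_1}}\,\mu_1(x),\qquad \mu_{u_1}^{\mathrm{DBC}}(x)=\frac{x\,f_{rd}}{(1-x)T_1+x f_{rd}-x\,g_{rd}^{s_1}}\,\mu_1(x).$$ Suppose $$f_{rd}-g_{rd}^{s_1}\le \min\left\{\frac{g_{s_1d}^{r}(T_1+f_{rd})}{T_1+f_{s_1d}},\ \frac{(T_1+g_{rd}^{s_1})^2(f_{s_1d}+T_1)}{T_1(f_{s_1d}+T_1-g_{s_1d}^{r})}-(T_1+2g_{rd}^{s_1})\right\}.$$ Then $$\max_{0\le \beta\le 1}\min\{\mu_1(\beta),\mu_{u_1}^{\mathrm{SBC}}(\beta)\}=\max_{0\le \alpha\le 1}\min\{\mu_1(\alpha),\mu_{u_1}^{\mathrm{DBC}}(\alpha)\}=\Big(1-\frac{T_1}{T_1+g_{rd}^{s_1}}\Big)(f_{s_1d}+T_1)+\frac{T_1}{T_1+g_{rd}^{s_1}}\,g_{s_1d}^{r}.$$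
   Context: This is the single-source case ($w_1=1$) of a cooperative relaying system with source $s_1$, relay $r$, destination $d$. Here $f_{mn}$ is the probability that link $(m,n)$ is not in outage (for Rayleigh fading, $f_{mn}=\exp(-(2^R-1)/(P\rho_{m,n}^2))$), and $g_{mn}^{I}$ is the probability that link $(m,n)$ is not in outage when node $I$ transmits simultaneously (so $g_{mn}^I\le f_{mn}$). The quantity $\min\{\mu_1,\mu_{u_1}^{\mathrm{SBC}}\}$ (resp. $\min\{\mu_1,\mu_{u_1}^{\mathrm{DBC}}\}$) is the maximal stable throughput of $s_1$ under the sensing-based (resp. decision-based) cooperative scheme as a function of the relay's interference probability $\beta$ (resp. $\alpha$); the theorem states the two schemes attain the same optimal maximal stable throughput under the displayed condition. *)

From Stdlib Require Import Reals.
Open Scope R_scope.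

Definition T1 (fsd fsr : R) : R := (1 - fsd) * fsr.

Definition mu1 (fsd fsr gsd : R) (x : R) : R :=
  (1 - x) * (fsd + T1 fsd fsr) + x * gsd.

Definition muSBC (fsd fsr frd grd gsd : R) (x : R) : R :=
  frd / ((1 - x) * T1 fsd fsr + frd - x * grd) * mu1 fsd fsr gsd x.

Definition muDBC (fsd fsr frd grd gsd : R) (x : R) : R :=
  (x * frd) / ((1 - x) * T1 fsd fsr + x * frd - x * grd) * mu1 fsd fsr gsd x.

Definition is_max_on01 (F : R -> R) (v : R) : Prop :=
  (exists x, 0 <= x <= 1 /\ F x = v) /\ (forall x, 0 <= x <= 1 -> F x <= v).

(* mu_1 is affine and nonincreasing.  Each relay throughput meets mu_1 at the
   crossing point b = T_1 / (T_1 + g_rd) and stays below mu_1(b) on [0, b], so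
   min {mu_1, mu_u} is maximised at b for both schemes.  On [0, b] the gap
   mu_1(b) - mu_u(x) is an explicit rational function whose numerator is
   nonnegative precisely by one half of the hypothesis on f_rd - g_rd: the first
   half for the sensing-based scheme, the second for the decision-based one. *)
From Pilot Require Import Defs.
From Stdlib Require Import Reals Lra Psatz.
Open Scope R_scope.

Lemma Rmin_crossing_is_max_on01 (f g : R -> R) (c : R) :
  0 <= c <= 1 -> f c <= g c ->
  (forall x, 0 <= x <= c -> g x <= f c) ->
  (forall x, c <= x <= 1 -> f x <= f c) ->
  is_max_on01 (fun x => Rmin (f x) (g x)) (f c).
Proof.
  intros Hc Hfg Hg Hf; split.
  - exists c; split; [exact Hc | exact (Rmin_left _ _ Hfg)].
  - intros x Hx; destruct (Rle_dec x c) as [Hxc | Hcx].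
    + apply (Rle_trans _ _ _ (Rmin_r _ _)); apply Hg; lra.
    + apply (Rle_trans _ _ _ (Rmin_l _ _)); apply Hf; lra.
Qed.

Lemma Rmult_le_of_le_div (a b c : R) : 0 < c -> a <= b / c -> a * c <= b.
Proof.
  intros Hc Hab.
  replace b with (b / c * c) by (field; lra).
  now apply Rmult_le_compat_r; [lra |].
Qed.

Section Crossing.

Variables fsd fsr frd grd gsd : R.

Local Notation T := (T1 fsd fsr).
Local Notation beta := (T / (T + grd)).
Local Notation mu1 := (mu1 fsd fsr gsd).
Local Notation muSBC := (muSBC fsd fsr frd grd gsd).
Local Notation muDBC := (muDBC fsd fsr frd grd gsd).

Hypothesis HT : 0 < T.
Hypothesis Hgrd : 0 <= grd < frd.
Hypothesis Hgsd : gsd <= fsd.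

Lemma crossing_range : 0 < beta <= 1.
Proof.
  split; [apply Rdiv_lt_0_compat; lra |].
  apply (Rmult_le_reg_r (T + grd)); [lra |].
  unfold Rdiv; rewrite Rmult_assoc, Rinv_l; lra.
Qed.

Lemma mu1_antitone (x y : R) : x <= y -> mu1 y <= mu1 x.
Proof. intros Hxy; unfold Defs.mu1; nra. Qed.

Lemma muSBC_crossing : muSBC beta = mu1 beta.
Proof.
  unfold Defs.muSBC.
  replace ((1 - beta) * T + frd - beta * grd) with frd by (field; lra).
  field; lra.
Qed.

Lemma muDBC_crossing : muDBC beta = mu1 beta.
Proof.
  unfold Defs.muDBC.
  replace ((1 - beta) * T + beta * frd - beta * grd) with (beta * frd) by (field; lra).
  field; lra.
Qed.

Lemma SBC_denominator_pos (x : R) : 0 <= x <= 1 -> 0 < (1 - x) * T + frd - x * grd.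
Proof. intros Hx; nra. Qed.

Lemma DBC_denominator_pos (x : R) : 0 <= x <= 1 -> 0 < (1 - x) * T + x * frd - x * grd.
Proof.
  intros Hx; destruct (Rle_dec x (1 / 2)).
  - assert (0 <= x * (frd - grd)) by (apply Rmult_le_pos; lra); nra.
  - assert (0 <= (1 - x) * T) by (apply Rmult_le_pos; lra); nra.
Qed.

Lemma mu1_crossing_sub_muSBC (x : R) : 0 <= x <= 1 ->
  mu1 beta - muSBC x =
  (T - (T + grd) * x) * ((fsd + T) * (T + grd) - (fsd + T - gsd) * (T + frd))
  / ((T + grd) * ((1 - x) * T + frd - x * grd)).
Proof.
  intros Hx; pose proof (SBC_denominator_pos x Hx).
  unfold Defs.muSBC, Defs.mu1; field; lra.
Qed.

Lemma mu1_crossing_sub_muDBC (x : R) : 0 <= x <= 1 ->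
  mu1 beta - muDBC x =
  (frd * (fsd + T - gsd) * ((T + grd) * x - T) ^ 2
   + ((fsd + T) * (T + grd) ^ 2 - T * (fsd + T - gsd) * (frd + T + grd))
     * (T - (T + grd) * x))
  / ((T + grd) ^ 2 * ((1 - x) * T + x * frd - x * grd)).
Proof.
  intros Hx; pose proof (DBC_denominator_pos x Hx).
  unfold Defs.muDBC, Defs.mu1; field; lra.
Qed.

Lemma le_crossing_mul (x : R) : x <= beta -> 0 <= T - (T + grd) * x.
Proof.
  intros Hx.
  enough ((T + grd) * x <= T) by lra.
  replace T with ((T + grd) * beta) at 2 by (field; lra).
  apply Rmult_le_compat_l; lra.
Qed.

Lemma muSBC_le_crossing (x : R) :
  (frd - grd) * (T + fsd) <= gsd * (T + frd) ->
  0 <= x <= beta -> muSBC x <= mu1 beta.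
Proof.
  intros Hcond Hx.
  assert (Hx1 : 0 <= x <= 1) by (pose proof crossing_range; lra).
  enough (0 <= mu1 beta - muSBC x) by lra.
  rewrite (mu1_crossing_sub_muSBC x Hx1).
  pose proof (SBC_denominator_pos x Hx1).
  unfold Rdiv; apply Rmult_le_pos; [| left; apply Rinv_0_lt_compat; nra].
  apply Rmult_le_pos; [apply le_crossing_mul; lra | nra].
Qed.

Lemma muDBC_le_crossing (x : R) :
  T * (fsd + T - gsd) * (frd + T + grd) <= (T + grd) ^ 2 * (fsd + T) ->
  0 <= x <= beta -> muDBC x <= mu1 beta.
Proof.
  intros Hcond Hx.
  assert (Hx1 : 0 <= x <= 1) by (pose proof crossing_range; lra).
  enough (0 <= mu1 beta - muDBC x) by lra.
  rewrite (mu1_crossing_sub_muDBC x Hx1).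
  pose proof (DBC_denominator_pos x Hx1).
  unfold Rdiv; apply Rmult_le_pos.
  2: left; apply Rinv_0_lt_compat, Rmult_lt_0_compat; [apply pow_lt |]; lra.
  apply Rplus_le_le_0_compat.
  - apply Rmult_le_pos; [nra | apply pow2_ge_0].
  - apply Rmult_le_pos; [lra | apply le_crossing_mul; lra].
Qed.

End Crossing.

Theorem theorem1 (fsd fsr frd grd gsd : R)
  (Hfsd : 0 <= fsd <= 1) (Hfsr : 0 <= fsr <= 1) (Hfrd : 0 <= frd <= 1)
  (Hgrd : 0 <= grd <= 1) (Hgsd : 0 <= gsd <= 1)
  (Hgsd_le : 0 <= gsd <= fsd) (Hgrd_lt : 0 <= grd < frd)
  (HT : 0 < T1 fsd fsr)
  (Hcond : frd - grd <=
     Rmin (gsd * (T1 fsd fsr + frd) / (T1 fsd fsr + fsd))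
          ((T1 fsd fsr + grd) ^ 2 * (fsd + T1 fsd fsr)
             / (T1 fsd fsr * (fsd + T1 fsd fsr - gsd))
           - (T1 fsd fsr + 2 * grd))) :
  let v := (1 - T1 fsd fsr / (T1 fsd fsr + grd)) * (fsd + T1 fsd fsr)
           + T1 fsd fsr / (T1 fsd fsr + grd) * gsd in
  is_max_on01 (fun b => Rmin (mu1 fsd fsr gsd b) (muSBC fsd fsr frd grd gsd b)) v /\
  is_max_on01 (fun a => Rmin (mu1 fsd fsr gsd a) (muDBC fsd fsr frd grd gsd a)) v.
Proof.
  intros v.
  assert (Hbeta := crossing_range fsd fsr frd grd HT Hgrd_lt).
  assert (Hcond_SBC : (frd - grd) * (T1 fsd fsr + fsd) <= gsd * (T1 fsd fsr + frd)).
  { apply Rmult_le_of_le_div; [lra |].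
    exact (Rle_trans _ _ _ Hcond (Rmin_l _ _)). }
  assert (Hcond_DBC : T1 fsd fsr * (fsd + T1 fsd fsr - gsd) * (frd + T1 fsd fsr + grd)
                      <= (T1 fsd fsr + grd) ^ 2 * (fsd + T1 fsd fsr)).
  { rewrite Rmult_comm; apply Rmult_le_of_le_div; [nra |].
    pose proof (Rle_trans _ _ _ Hcond (Rmin_r _ _)); lra. }
  change v with (mu1 fsd fsr gsd (T1 fsd fsr / (T1 fsd fsr + grd))).
  split; apply Rmin_crossing_is_max_on01; try lra.
  - rewrite muSBC_crossing; lra.
  - intros x Hx; apply muSBC_le_crossing; lra.
  - intros x Hx; apply mu1_antitone; lra.
  - rewrite muDBC_crossing; lra.
  - intros x Hx; apply muDBC_le_crossing; lra.
  - intros x Hx; apply mu1_antitone; lra.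
Qed.
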